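(* For every $q\in X^*\setminus\{e\}$, the star root $\sqrt[*]{P_q}$ is a suffix code, i.e. no word of $\sqrt[*]{P_q}$ is a proper suffix of another word of $\sqrt[*]{P_q}$.
   Context: $X$ is a finite alphabet; $X^*$ the finite words (empty word $e$); $w\sqsubseteq\eta$ means $w$ is a prefix of $\eta$, $w\sqsubset\eta$ a proper prefix. $P_q:=\{v: e\sqsubset v\sqsubseteq q\sqsubset v\cdot q\}$. The star root of $P_q$ is $\sqrt[*]{P_q}:=P_q\setminus(P_q^2\cdot P_q^* )$, i.e. the elements of $P_q$ that are not a concatenation of two or more elements of $P_q$. *)

From mathcomp Require Import all_boot.
Set Implicit Arguments. Unset Strict Implicit. Unset Printing Implicit Defensive.

Definition proper_prefix (X : eqType) (w eta : seq X) : bool :=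
  prefix w eta && (w != eta).

Definition Pq (X : eqType) (q : seq X) (v : seq X) : Prop :=
  proper_prefix [::] v /\ prefix v q /\ proper_prefix q (v ++ q).

Definition in_P2Pstar (X : eqType) (P : seq X -> Prop) (v : seq X) : Prop :=
  exists s : seq (seq X), 2 <= size s /\ (forall u, u \in s -> P u) /\ flatten s = v.

Definition star_root (X : eqType) (P : seq X -> Prop) (v : seq X) : Prop :=
  P v /\ ~ in_P2Pstar P v.

Definition suffix_code (X : eqType) (C : seq X -> Prop) : Prop :=
  forall u w, C u -> C w -> ~ (suffix u w /\ u != w).

From mathcomp Require Import all_boot.
Set Implicit Arguments. Unset Strict Implicit. Unset Printing Implicit Defensive.

(* If [u] is a proper suffix of [w] in [P_q], write [w = x u] with [x <> e].
   Then [x] is itself in [P_q]: it is a prefix of [w], hence of [q], and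
   [q ⊑ x q] follows from [q ⊑ x u q] because [q ⊑ u q].  So [w = x · u]
   lies in [P_q^2], and [w] is not in the star root. *)

Lemma prefix_of_common_prefix (X : eqType) (a b c : seq X) :
  prefix a c -> prefix b c -> size a <= size b -> prefix a b.
Proof.
rewrite !prefixE => /eqP def_a /eqP def_b le_ab.
by rewrite -def_b take_takel // def_a.
Qed.

Lemma in_P2Pstar_cat (X : eqType) (P : seq X -> Prop) (x u : seq X) :
  P x -> P u -> in_P2Pstar P (x ++ u).
Proof.
move=> Px Pu; exists [:: x; u]; split=> //; split; last by rewrite /= cats0.
by move=> v; rewrite !inE => /orP [] /eqP ->.
Qed.

Lemma Pq_catl (X : eqType) (q x u : seq X) :
  x != [::] -> Pq q (x ++ u) -> Pq q u -> Pq q x.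
Proof.
move=> nz_x [_ [xu_q /andP [q_xuq _]]] [_ [_ /andP [q_uq _]]].
split; first by rewrite /proper_prefix prefix0s eq_sym.
split; first exact: catl_prefix xu_q.
apply/andP; split.
  apply: (prefix_of_common_prefix q_xuq); last by rewrite size_cat leq_addl.
  by move/prefixP: q_uq => [r ur]; rewrite -catA ur catA prefix_prefix.
apply: contra_neq nz_x => /(congr1 size); rewrite size_cat -{1}[size q]add0n.
by move/addIn/esym/size0nil.
Qed.

Theorem corollary5 (X : finType) (q : seq X) :
  q != [::] -> suffix_code (star_root (Pq q)).
Proof.
move=> _ u w [Pu _] [Pw not_P2Pstar_w] [/suffixP [x def_w] u_ne_w].
have nz_x : x != [::] by apply: contra u_ne_w; rewrite def_w => /eqP ->.
apply: not_P2Pstar_w; rewrite def_w in Pw *.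
exact: in_P2Pstar_cat (Pq_catl nz_x Pw Pu) Pu.
Qed.
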